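(* For every $\alpha\in(1/2,1/\sqrt2)$, the set $S_\alpha$ satisfies $\dim_H S_\alpha=-\log2/\log\alpha$. In particular, for $h\in(1,2)$ and $\alpha=2^{-1/h}$, $\dim_H S_\alpha=h$.
   Context: Let $\mathcal{R}$ be counterclockwise rotation by $\pi/2$, $\mathcal{R}(x_1,x_2)=(-x_2,x_1)$. For $\alpha\in(1/2,1/\sqrt2)$ let $F_1(x)=(1,0)+\alpha\mathcal{R}x$, $F_2(x)=(-1,0)+\alpha\mathcal{R}x$, and for a finite word $w=(w_1,\dots,w_k)\in\{1,2\}^k$ let $F_w=F_{w_1}\circ\cdots\circ F_{w_k}$ ($F_\emptyset=\mathrm{Id}$). Let $I=[-1,1]\times\{0\}$. $S_\alpha$ is the compact set $S_\alpha=\overline{\bigcup_{k\ge0}\bigcup_{w\in\{1,2\}^k}F_w(I)}$, equivalently the unique nonempty compact set with $S_\alpha=I\cup F_1(S_\alpha)\cup F_2(S_\alpha)$. *)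

From Stdlib Require Import Reals Lra List.
Open Scope R_scope.

Definition pt := (R * R)%type.

Definition dist2 (x y : pt) : R :=
  sqrt ((fst x - fst y)^2 + (snd x - snd y)^2).

Definition rot (x : pt) : pt := (- snd x, fst x).

(* F_1 (true) and F_2 (false) *)
Definition Fmap (alpha : R) (b : bool) (x : pt) : pt :=
  let r := rot x in
  ((if b then 1 else -1) + alpha * fst r, alpha * snd r).

Definition Fword (alpha : R) (w : list bool) : pt -> pt :=
  fold_right (fun b g => fun x => Fmap alpha b (g x)) (fun x => x) w.

Definition Iseg (x : pt) : Prop := -1 <= fst x <= 1 /\ snd x = 0.

Definition Sunion (alpha : R) (x : pt) : Prop :=
  exists (w : list bool) (y : pt), Iseg y /\ x = Fword alpha w y.

Definition closure2 (A : pt -> Prop) (x : pt) : Prop :=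
  forall eps, 0 < eps -> exists y, A y /\ dist2 x y < eps.

Definition S_alpha (alpha : R) : pt -> Prop := closure2 (Sunion alpha).

Definition diam_le (U : pt -> Prop) (r : R) : Prop :=
  forall x y, U x -> U y -> dist2 x y <= r.

(* Diameters are replaced by positive
   upper bounds r_n (equivalent, since s > 0). *)
Definition hausdorff_null (s : R) (A : pt -> Prop) : Prop :=
  forall delta eps, 0 < delta -> 0 < eps ->
    exists (U : nat -> pt -> Prop) (r : nat -> R),
      (forall x, A x -> exists n, U n x) /\
      (forall n, 0 < r n <= delta /\ diam_le (U n) (r n)) /\
      (forall N, sum_f_R0 (fun n => Rpower (r n) s) N <= eps).

Definition is_glb (E : R -> Prop) (m : R) : Prop :=
  (forall x, E x -> m <= x) /\ (forall b, (forall x, E x -> b <= x) -> b <= m).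

Definition hausdorff_dim (A : pt -> Prop) (d : R) : Prop :=
  is_glb (fun s => 0 < s /\ hausdorff_null s A) d.

From Stdlib Require Import Reals Lra Lia List FunctionalExtensionality ClassicalEpsilon Classical.
From Coquelicot Require Import Coquelicot.
Open Scope R_scope.

(* Let [d = -ln 2 / ln a] be the similarity dimension of the two maps [F_1, F_2] of
   ratio [a].  We show that [S_alpha] is [s]-null for [s > d] and not [s]-null for
   [0 < s < d]; this pins the dimension at [d].

   Upper bound: the relation [S = I u F_1(S) u F_2(S)] yields, at every level [k], a
   finite net of [S_alpha] of radius [O(a^k)] with [O(2^k)] points, so the [s]-sums are
   [O((2 a^s)^k) -> 0] when [a^s < 1/2].

   Lower bound (needs [a^2 < 1/2]): two letters of [F_u1 F_u2 ...] act on each coordinate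
   as [x |-> +-1 - a^2 x], so every infinite binary word [u] codes a point of [S_alpha]
   whose coordinates are signed digit series in [-a^2].  Since [a^2 < 1/2] a differing
   digit dominates all later ones, so words first differing at position [j] code points
   at distance [>= g a^j].  A cover with small [s]-sum therefore lies in cylinders of
   total uniform mass [< 1], which cannot contain all infinite words. *)

Lemma dist2_sym x y : dist2 x y = dist2 y x.
Proof. unfold dist2. f_equal. ring. Qed.

Lemma dist2_triangle x y z : dist2 x z <= dist2 x y + dist2 y z.
Proof.
  pose proof (triangle (fst x) (snd x) (fst z) (snd z) (fst y) (snd y)) as T.
  unfold dist_euc in T. unfold dist2. rewrite <- !Rsqr_pow2. exact T.
Qed.

Lemma dist2_ge_fst x y : Rabs (fst x - fst y) <= dist2 x y.
Proof.
  unfold dist2. rewrite <- sqrt_Rsqr_abs. apply sqrt_le_1_alt.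
  rewrite Rsqr_pow2. pose proof (pow2_ge_0 (snd x - snd y)). lra.
Qed.

Lemma dist2_ge_snd x y : Rabs (snd x - snd y) <= dist2 x y.
Proof.
  unfold dist2. rewrite <- sqrt_Rsqr_abs. apply sqrt_le_1_alt.
  rewrite Rsqr_pow2. pose proof (pow2_ge_0 (fst x - fst y)). lra.
Qed.

Lemma dist2_le_sum x y : dist2 x y <= Rabs (fst x - fst y) + Rabs (snd x - snd y).
Proof.
  set (u := Rabs (fst x - fst y)); set (v := Rabs (snd x - snd y)).
  assert (Hu : 0 <= u) by apply Rabs_pos. assert (Hv : 0 <= v) by apply Rabs_pos.
  unfold dist2. rewrite <- (sqrt_pow2 (u + v)) by lra. apply sqrt_le_1_alt.
  rewrite <- !Rsqr_pow2, (Rsqr_abs (fst x - fst y)), (Rsqr_abs (snd x - snd y)).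
  fold u v. unfold Rsqr. pose proof (Rmult_le_pos u v Hu Hv). lra.
Qed.

Lemma dist2_Fmap a b x y : 0 <= a -> dist2 (Fmap a b x) (Fmap a b y) = a * dist2 x y.
Proof.
  intro Ha. unfold dist2, Fmap, rot; cbn [fst snd].
  replace (_ ^ 2 + _ ^ 2) with (a ^ 2 * ((fst x - fst y) ^ 2 + (snd x - snd y) ^ 2)) by ring.
  pose proof (pow2_ge_0 (fst x - fst y)); pose proof (pow2_ge_0 (snd x - snd y)).
  rewrite sqrt_mult, sqrt_pow2 by (auto using pow2_ge_0; lra). reflexivity.
Qed.

(** * Signed digit series  [sum_l sgn(b_l) q^l]  for [|q| < 1] *)

Definition sgn (b : bool) : R := if b then 1 else -1.

Definition digits (q : R) (b : nat -> bool) : R := Series (fun l => sgn (b l) * q ^ l).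

Fixpoint digits_prefix (q : R) (b : nat -> bool) (m : nat) : R :=
  match m with
  | O => 0
  | S m' => sgn (b O) + q * digits_prefix q (fun l => b (S l)) m'
  end.

Section DigitSeries.
Variable q : R.
Hypothesis Hq : Rabs q < 1.

Lemma digits_term_abs b l : Rabs (sgn (b l) * q ^ l) = Rabs q ^ l.
Proof.
  rewrite Rabs_mult, RPow_abs.
  replace (Rabs (sgn (b l))) with 1 by (destruct (b l); simpl; unfold Rabs;
    destruct Rcase_abs; lra).
  ring.
Qed.

Lemma digits_abs_summable b : ex_series (fun l => Rabs (sgn (b l) * q ^ l)).
Proof.
  apply (ex_series_ext (fun l => Rabs q ^ l)).
  - intro l. now rewrite digits_term_abs.
  - apply ex_series_geom. now rewrite Rabs_Rabsolu.
Qed.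

Lemma digits_cons b : digits q b = sgn (b O) + q * digits q (fun l => b (S l)).
Proof.
  unfold digits. rewrite Series_incr_1 by apply ex_series_Rabs, digits_abs_summable.
  rewrite <- Series_scal_l. simpl. rewrite Rmult_1_r. f_equal.
  apply Series_ext. intro l. simpl. ring.
Qed.

Lemma digits_bound b : Rabs (digits q b) <= / (1 - Rabs q).
Proof.
  unfold digits. eapply Rle_trans; [apply Series_Rabs, digits_abs_summable|].
  rewrite <- Series_geom by now rewrite Rabs_Rabsolu.
  apply Series_le; [intro l; rewrite digits_term_abs; split; [apply pow_le, Rabs_pos|lra]|].
  apply ex_series_geom. now rewrite Rabs_Rabsolu.
Qed.

Lemma digits_split m : forall b,
  digits q b = digits_prefix q b m + q ^ m * digits q (fun l => b (m + l)%nat).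
Proof.
  induction m as [|m IH]; intro b; [simpl; rewrite Rplus_0_l, Rmult_1_l; reflexivity|].
  rewrite digits_cons at 1. rewrite IH. simpl. ring.
Qed.

(* The leading digit difference [2] minus the largest possible tail difference. *)
Definition digit_gap := 2 - 2 * Rabs q / (1 - Rabs q).

Lemma digit_gap_pos : Rabs q < 1 / 2 -> 0 < digit_gap.
Proof.
  intro Hq2. unfold digit_gap.
  assert (Rabs q / (1 - Rabs q) < 1).
  { apply (Rmult_lt_reg_r (1 - Rabs q)); [lra|]. unfold Rdiv. rewrite Rmult_assoc, Rinv_l; lra. }
  lra.
Qed.

(* Two digit sequences first differing at position [m] have values at distance at
   least [|q|^m * digit_gap]: the differing digit outweighs all later ones. *)
Lemma digits_separation m : forall b b',
  (forall l, (l < m)%nat -> b l = b' l) -> b m <> b' m ->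
  Rabs q ^ m * digit_gap <= Rabs (digits q b - digits q b').
Proof.
  induction m as [|m IH]; intros b b' Hagree Hdiff; rewrite (digits_cons b), (digits_cons b').
  - set (t := digits q (fun l => b (S l))); set (t' := digits q (fun l => b' (S l))).
    assert (Hhead : Rabs (sgn (b O) - sgn (b' O)) = 2).
    { destruct (b O), (b' O); try congruence; simpl;
        [rewrite Rabs_right | rewrite Rabs_left]; lra. }
    assert (Htail : Rabs (q * (t - t')) <= Rabs q * (2 * / (1 - Rabs q))).
    { rewrite Rabs_mult. apply Rmult_le_compat_l; [apply Rabs_pos|].
      replace (t - t') with (t + - t') by ring.
      pose proof (Rabs_triang t (- t')) as Tr. rewrite Rabs_Ropp in Tr.
      pose proof (digits_bound (fun l => b (S l))) as Bt.
      pose proof (digits_bound (fun l => b' (S l))) as Bt'. fold t t' in Bt, Bt'. lra. }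
    pose proof (Rabs_triang_inv (sgn (b O) - sgn (b' O)) (- (q * (t - t')))) as T.
    rewrite Rabs_Ropp in T. unfold digit_gap. simpl. unfold Rdiv.
    replace (sgn (b O) + q * t - (sgn (b' O) + q * t'))
      with (sgn (b O) - sgn (b' O) - - (q * (t - t'))) by ring. lra.
  - rewrite (Hagree O) by lia.
    replace (sgn (b' O) + q * digits q (fun l => b (S l)) - _)
      with (q * (digits q (fun l => b (S l)) - digits q (fun l => b' (S l)))) by ring.
    rewrite Rabs_mult. simpl. rewrite Rmult_assoc.
    apply Rmult_le_compat_l; [apply Rabs_pos|].
    apply IH; [intros l Hl; apply Hagree; lia | exact Hdiff].
Qed.

End DigitSeries.

(** * Coding points of [S_alpha] by infinite binary words *)

(* Two steps of the IFS act on the first coordinate as [x |-> sgn b0 - a^2 x] and on the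
   second as [y |-> a sgn b1 - a^2 y]; hence the infinite word [u] codes the point whose
   coordinates are digit series in [q = -a^2] of the even and odd letters of [u]. *)
Definition evens (u : nat -> bool) : nat -> bool := fun l => u (2 * l)%nat.
Definition odds (u : nat -> bool) : nat -> bool := fun l => u (S (2 * l)).

Definition code_point (a : R) (u : nat -> bool) : pt :=
  (digits (- (a * a)) (evens u), a * digits (- (a * a)) (odds u)).

Fixpoint prefix (u : nat -> bool) (n : nat) : list bool :=
  match n with O => nil | S n' => u O :: prefix (fun i => u (S i)) n' end.

Lemma Rabs_neg_sq a : Rabs (- (a * a)) = a * a.
Proof. rewrite Rabs_Ropp. apply Rabs_right, Rle_ge, Rle_0_sqr. Qed.

Lemma Fword_prefix a m : forall u,
  Fword a (prefix u (2 * m)) (0, 0) =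
  (digits_prefix (- (a * a)) (evens u) m, a * digits_prefix (- (a * a)) (odds u) m).
Proof.
  induction m as [|m IH]; intro u; [simpl; f_equal; ring|].
  replace (2 * S m)%nat with (S (S (2 * m))) by lia.
  simpl prefix. simpl Fword. rewrite IH. unfold Fmap, rot, evens, odds; simpl.
  replace (fun l => u (S (l + S (l + 0)))) with (fun l => u (S (S (l + (l + 0)))))
    by (apply functional_extensionality; intro; f_equal; lia).
  replace (fun l => u (S (S (l + S (l + 0))))) with (fun l => u (S (S (S (l + (l + 0))))))
    by (apply functional_extensionality; intro; f_equal; lia).
  f_equal; unfold sgn; destruct (u O), (u 1%nat); ring.
Qed.

Section Coding.
Variable a : R.
Hypothesis Ha : 0 < a.
Hypothesis Ha2 : a * a < 1.

Let Hq : Rabs (- (a * a)) < 1.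
Proof. now rewrite Rabs_neg_sq. Qed.

Lemma code_point_approx u m :
  dist2 (code_point a u) (Fword a (prefix u (2 * m)) (0, 0))
    <= (a * a) ^ m * ((1 + a) * / (1 - a * a)).
Proof.
  rewrite Fword_prefix. eapply Rle_trans; [apply dist2_le_sum|]. unfold code_point; simpl.
  rewrite (digits_split _ Hq m (evens u)), (digits_split _ Hq m (odds u)).
  replace (_ + _ - digits_prefix _ (evens u) m)
    with ((- (a * a)) ^ m * digits (- (a * a)) (fun l => evens u (m + l)%nat)) by ring.
  replace (a * (_ + _) - a * digits_prefix _ (odds u) m)
    with (a * ((- (a * a)) ^ m * digits (- (a * a)) (fun l => odds u (m + l)%nat))) by ring.
  pose proof (digits_bound _ Hq (fun l => evens u (m + l)%nat)) as B1.
  pose proof (digits_bound _ Hq (fun l => odds u (m + l)%nat)) as B2.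
  rewrite Rabs_neg_sq in B1, B2.
  rewrite !Rabs_mult, <- RPow_abs, Rabs_neg_sq, (Rabs_right a) by lra.
  assert (Hp : 0 <= (a * a) ^ m) by (apply pow_le, Rle_0_sqr).
  assert (0 <= (a * a) ^ m * Rabs (digits (- (a * a)) (fun l => odds u (m + l)%nat))
            <= (a * a) ^ m * / (1 - a * a))
    by (split; [apply Rmult_le_pos; [lra|apply Rabs_pos]|apply Rmult_le_compat_l; lra]).
  assert ((a * a) ^ m * Rabs (digits (- (a * a)) (fun l => evens u (m + l)%nat))
            <= (a * a) ^ m * / (1 - a * a)) by (apply Rmult_le_compat_l; lra).
  nra.
Qed.

Lemma code_point_in_S u : S_alpha a (code_point a u).
Proof.
  intros eps Heps.
  set (C := (1 + a) * / (1 - a * a)).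
  assert (HC : 0 < C) by (apply Rmult_lt_0_compat; [lra|apply Rinv_0_lt_compat; lra]).
  assert (Haa : Rabs (a * a) < 1) by (rewrite Rabs_right; [lra|apply Rle_ge, Rle_0_sqr]).
  destruct (pow_lt_1_zero (a * a) Haa (eps / C)) as [m Hm]; [apply Rdiv_lt_0_compat; lra|].
  specialize (Hm m (Nat.le_refl m)).
  rewrite Rabs_right in Hm by (apply Rle_ge, pow_le, Rle_0_sqr).
  exists (Fword a (prefix u (2 * m)) (0, 0)). split.
  - exists (prefix u (2 * m)), (0, 0). split; [unfold Iseg; simpl; lra|reflexivity].
  - eapply Rle_lt_trans; [apply code_point_approx|]. fold C.
    apply Rmult_lt_compat_r with (r := C) in Hm; [|exact HC].
    unfold Rdiv in Hm. rewrite Rmult_assoc, Rinv_l in Hm by lra. lra.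
Qed.

Lemma code_point_separation j u v :
  (forall i, (i < j)%nat -> u i = v i) -> u j <> v j ->
  a ^ j * digit_gap (- (a * a)) <= dist2 (code_point a u) (code_point a v).
Proof.
  intros Hagree Hdiff.
  pose proof (digits_separation _ Hq) as Sep. rewrite Rabs_neg_sq in Sep.
  unfold digit_gap in *. rewrite Rabs_neg_sq in *.
  destruct (Nat.Even_or_Odd j) as [[m Hm]|[m Hm]]; subst j.
  - eapply Rle_trans; [|apply dist2_ge_fst]. unfold code_point; simpl fst.
    rewrite pow_mult. replace (a ^ 2) with (a * a) by ring.
    apply Sep; [intros l Hl; apply Hagree; lia | exact Hdiff].
  - eapply Rle_trans; [|apply dist2_ge_snd]. unfold code_point; simpl snd.
    rewrite <- Rmult_minus_distr_l, Rabs_mult, (Rabs_right a) by lra.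
    rewrite pow_add, pow_mult. replace (a ^ 2) with (a * a) by ring.
    replace ((a * a) ^ m * a ^ 1 * _) with (a * ((a * a) ^ m * (2 - 2 * (a * a) / (1 - a * a))))
      by ring.
    apply Rmult_le_compat_l; [lra|].
    apply Sep; [intros l Hl; apply Hagree; unfold odds; lia|].
    unfold odds. replace (S (2 * m)) with (2 * m + 1)%nat by lia. exact Hdiff.
Qed.

End Coding.

(** * Hausdorff null sets from finite nets *)

Lemma sum_indicator (L : nat) (A : R) N :
  sum_f_R0 (fun n => if Nat.ltb n L then A else 0) N = INR (Nat.min (S N) L) * A.
Proof.
  induction N as [|N IH]; cbn [sum_f_R0].
  - destruct (Nat.ltb_spec 0 L).
    + replace (Nat.min 1 L) with 1%nat by lia. simpl; ring.
    + replace (Nat.min 1 L) with 0%nat by lia. simpl; ring.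
  - rewrite IH. destruct (Nat.ltb_spec (S N) L).
    + replace (Nat.min (S (S N)) L) with (S (Nat.min (S N) L)) by lia. rewrite S_INR. ring.
    + replace (Nat.min (S (S N)) L) with (Nat.min (S N) L) by lia. ring.
Qed.

Lemma sum_half_pow N : sum_f_R0 (fun n => (1 / 2) ^ n) N = 2 - (1 / 2) ^ N.
Proof. induction N as [|N IH]; simpl; [lra|]. rewrite IH. lra. Qed.

Lemma Rpower_pos x y : 0 < Rpower x y.
Proof. apply exp_pos. Qed.

Lemma small_radius s delta x : 0 < s -> 0 < delta -> 0 < x ->
  exists rho, 0 < rho <= delta /\ Rpower rho s <= x.
Proof.
  intros Hs Hdelta Hx. exists (Rmin delta (Rpower x (1 / s))).
  assert (0 < Rmin delta (Rpower x (1 / s))) by (apply Rmin_glb_lt; [lra|apply Rpower_pos]).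
  split; [split; [lra|apply Rmin_l]|].
  eapply Rle_trans; [apply Rle_Rpower_l; [lra|split; [lra|apply Rmin_r]]|].
  rewrite Rpower_mult. replace (1 / s * s) with 1 by (field; lra).
  rewrite Rpower_1 by exact Hx. lra.
Qed.

(* A set admitting, at every scale, a finite [r]-net [C] with [#C (2r)^s] small is
   [s]-null: the closed [r]-balls around [C] form the cover, padded with empty sets of
   geometrically decreasing size so that every partial sum stays bounded. *)
Lemma hausdorff_null_of_nets s A : 0 < s ->
  (forall delta eps, 0 < delta -> 0 < eps -> exists (C : list pt) (r : R),
     0 < r /\ 2 * r <= delta /\ INR (length C) * Rpower (2 * r) s <= eps /\
     forall x, A x -> exists c, In c C /\ dist2 x c <= r) ->
  hausdorff_null s A.
Proof.
  intros Hs Hnet delta eps Hdelta Heps.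
  destruct (Hnet delta (eps / 2) Hdelta ltac:(lra)) as [C [r [Hr [Hrd [Hsum HC]]]]].
  set (L := length C).
  assert (Hgeom : forall n, 0 < eps / 4 * (1 / 2) ^ n)
    by (intro n; apply Rmult_lt_0_compat; [lra|apply pow_lt; lra]).
  destruct (choice (fun n rn => 0 < rn <= delta /\ Rpower rn s <= eps / 4 * (1 / 2) ^ n))
    as [pad Hpad]; [intro n; apply small_radius; auto|].
  exists (fun n x => (n < L)%nat /\ dist2 x (nth n C (0, 0)) <= r),
         (fun n => if Nat.ltb n L then 2 * r else pad n).
  split; [|split].
  - intros x Hx. destruct (HC x Hx) as [c [Hc Hxc]].
    destruct (In_nth C c (0, 0) Hc) as [n [Hn Hnc]].
    exists n. rewrite Hnc. auto.
  - intro n. destruct (Nat.ltb_spec n L) as [Hn|Hn].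
    + split; [lra|]. intros x y [_ Hx] [_ Hy].
      eapply Rle_trans; [apply (dist2_triangle _ (nth n C (0, 0)))|].
      rewrite (dist2_sym _ y). lra.
    + split; [apply Hpad|]. intros x y [Hn' _]. lia.
  - intro N.
    apply Rle_trans with (sum_f_R0 (fun n => (if Nat.ltb n L then Rpower (2 * r) s else 0)
                                           + eps / 4 * (1 / 2) ^ n) N).
    + apply sum_Rle. intros n _. destruct (Nat.ltb_spec n L).
      * pose proof (Hgeom n). lra.
      * pose proof (proj2 (Hpad n)). lra.
    + rewrite sum_plus, sum_indicator.
      replace (sum_f_R0 (fun n => eps / 4 * (1 / 2) ^ n) N)
        with (eps / 4 * sum_f_R0 (fun n => (1 / 2) ^ n) N)
        by (rewrite scal_sum; apply sum_eq; intros; ring).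
      rewrite sum_half_pow.
      assert (INR (Nat.min (S N) L) <= INR L) by (apply le_INR; lia).
      pose proof (pow_lt (1 / 2) N ltac:(lra)). pose proof (Rpower_pos (2 * r) s).
      fold L in Hsum. nra.
Qed.

Lemma net_closure A (C : list pt) r : 0 < r ->
  (forall x, A x -> exists c, In c C /\ dist2 x c <= r) ->
  forall x, closure2 A x -> exists c, In c C /\ dist2 x c <= 2 * r.
Proof.
  intros Hr HC x Hx. destruct (Hx r Hr) as [y [Hy Hxy]]. destruct (HC y Hy) as [c [Hc Hyc]].
  exists c. split; [exact Hc|]. pose proof (dist2_triangle x y c). lra.
Qed.

Lemma Fword_bound a w y : 0 <= a < 1 -> Iseg y -> dist2 (Fword a w y) (0, 0) <= / (1 - a).
Proof.
  intros Ha Hy. assert (H1 : 1 <= / (1 - a)) by (rewrite <- Rinv_1; apply Rinv_le_contravar; lra).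
  induction w as [|b w IH]; simpl.
  - destruct y as [t y2]. destruct Hy as [Ht Hy2]; simpl in Ht, Hy2; subst y2.
    eapply Rle_trans; [apply dist2_le_sum|]. simpl.
    replace (0 - 0) with 0 by ring. rewrite Rabs_R0, Rminus_0_r.
    unfold Rabs; destruct Rcase_abs; lra.
  - eapply Rle_trans; [apply (dist2_triangle _ (Fmap a b (0, 0)))|].
    rewrite dist2_Fmap by lra.
    replace (dist2 (Fmap a b (0, 0)) (0, 0)) with 1
      by (symmetry; unfold dist2, Fmap, rot; simpl;
          replace (_ + _) with 1 by (destruct b; ring); apply sqrt_1).
    assert (a * / (1 - a) + 1 = / (1 - a)) by (field; lra). nra.
Qed.

Lemma grid_net n : forall lo h t, 0 < h -> lo <= t <= lo + INR n * h ->
  exists i, (i <= n)%nat /\ Rabs (t - (lo + INR i * h)) <= h.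
Proof.
  induction n as [|n IH]; intros lo h t Hh Ht.
  - exists 0%nat. split; [lia|]. simpl in *. replace (t - (lo + 0 * h)) with 0 by lra.
    rewrite Rabs_R0. lra.
  - destruct (Rle_lt_dec t (lo + INR n * h)).
    + destruct (IH lo h t Hh) as [i [Hi Hti]]; [pose proof (pos_INR n); lra|].
      exists i. split; [lia|exact Hti].
    + exists (S n). split; [lia|]. rewrite S_INR in *. unfold Rabs; destruct Rcase_abs; lra.
Qed.

Lemma segment_net N : (0 < N)%nat -> exists Cs : list pt, length Cs = S N /\
  forall y, Iseg y -> exists c, In c Cs /\ dist2 y c <= 2 / INR N.
Proof.
  intro HN. assert (HNpos : 0 < INR N) by (apply lt_0_INR; exact HN).
  set (h := 2 / INR N). assert (Hh : 0 < h) by (apply Rdiv_lt_0_compat; lra).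
  exists (map (fun i => (-1 + INR i * h, 0)) (seq 0 (S N))).
  split; [now rewrite length_map, length_seq|].
  intros [t y2] [Ht Hy2]; simpl in Ht, Hy2; subst y2.
  destruct (grid_net N (-1) h t Hh) as [i [Hi Hti]];
    [unfold h; replace (-1 + INR N * (2 / INR N)) with 1 by (field; lra); lra|].
  exists (-1 + INR i * h, 0). split.
  - apply (in_map (fun i => (-1 + INR i * h, 0))). apply in_seq. lia.
  - eapply Rle_trans; [apply dist2_le_sum|]. simpl.
    replace (0 - 0) with 0 by ring. rewrite Rabs_R0, Rplus_0_r. exact Hti.
Qed.

Definition net_rho (a : R) : R := 2 / (1 - a).

Section UnionNets.
Variable a : R.
Hypothesis Ha : 1 / 2 < a < 1.

Let beta := / a.
Let E := (2 + beta) / (2 - beta).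

(* Since [S = I u F_1(S) u F_2(S)] at the level of the union, a net at level [k+1] is
   the image of a level-[k] net under both maps together with a net of [I] of mesh
   [a^(k+1)]; this gives [#C_(k+1) <= 2 #C_k + beta^(k+1) + 2], hence [#C_k = O(2^k)]. *)
Lemma union_net_invariant k : exists C : list pt,
  INR (length C) + E * beta ^ k <= (E + 1) * 2 ^ k /\
  forall x, Sunion a x -> exists c, In c C /\ dist2 x c <= net_rho a * a ^ k.
Proof.
  assert (Hbe1 : 1 < beta) by (unfold beta; rewrite <- Rinv_1; apply Rinv_lt_contravar; lra).
  assert (Hbe2 : beta < 2)
    by (unfold beta; replace 2 with (/ (1 / 2)) by field; apply Rinv_lt_contravar; lra).
  assert (HE : E * (2 - beta) = 2 + beta) by (unfold E; field; lra).
  assert (Hrho : 2 <= net_rho a).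
  { unfold net_rho. apply (Rmult_le_reg_r (1 - a)); [lra|].
    unfold Rdiv. rewrite Rmult_assoc, Rinv_l; lra. }
  induction k as [|k IH].
  - exists ((0, 0) :: nil). split; [simpl; lra|].
    intros x [w [y [Hy ->]]]. exists (0, 0). split; [left; reflexivity|].
    eapply Rle_trans; [apply Fword_bound; [lra|exact Hy]|].
    unfold net_rho. simpl. unfold Rdiv.
    assert (0 < / (1 - a)) by (apply Rinv_0_lt_compat; lra). lra.
  - destruct IH as [C [HL HC]].
    assert (Hbk : 1 <= beta ^ k) by (apply pow_R1_Rle; lra).
    destruct (nfloor1_ex (beta ^ S k)) as [n Hn]; [simpl; nra|].
    destruct (segment_net (S n) ltac:(lia)) as [Cs [HCs HI]].
    rewrite S_INR in HI.
    exists (map (Fmap a true) C ++ map (Fmap a false) C ++ Cs). split.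
    + rewrite !length_app, !length_map, HCs, !plus_INR, !S_INR. simpl pow in *. nra.
    + intros x [[|b w] [y [Hy ->]]].
      * destruct (HI y Hy) as [c [Hc Hyc]]. exists c.
        split; [apply in_or_app; right; apply in_or_app; right; exact Hc|].
        eapply Rle_trans; [exact Hyc|].
        assert (HaS : a ^ S k = / beta ^ S k) by (unfold beta; rewrite pow_inv, Rinv_inv; auto).
        rewrite HaS. unfold Rdiv.
        pose proof (pos_INR n).
        assert (/ (INR n + 1) <= / beta ^ S k) by (apply Rinv_le_contravar; lra).
        assert (0 < / beta ^ S k) by (apply Rinv_0_lt_compat; simpl; nra). nra.
      * destruct (HC (Fword a w y) (ex_intro _ w (ex_intro _ y (conj Hy eq_refl))))
          as [c [Hc Hd]].
        exists (Fmap a b c). split.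
        { apply in_or_app. destruct b; [left|right; apply in_or_app; left]; apply in_map, Hc. }
        simpl. rewrite dist2_Fmap by lra.
        replace (net_rho a * (a * a ^ k)) with (a * (net_rho a * a ^ k)) by ring.
        apply Rmult_le_compat_l; lra.
Qed.

Lemma S_alpha_nets : exists K, 0 < K /\ forall k, exists C : list pt,
  INR (length C) <= K * 2 ^ k /\
  forall x, S_alpha a x -> exists c, In c C /\ dist2 x c <= 2 * (net_rho a * a ^ k).
Proof.
  assert (Hbe2 : beta < 2)
    by (unfold beta; replace 2 with (/ (1 / 2)) by field; apply Rinv_lt_contravar; lra).
  assert (Hbe0 : 0 < beta) by (apply Rinv_0_lt_compat; lra).
  assert (HE : 0 < E) by (unfold E; apply Rdiv_lt_0_compat; lra).
  exists (E + 1). split; [lra|]. intro k.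
  destruct (union_net_invariant k) as [C [HL HC]]. exists C. split.
  - assert (0 < E * beta ^ k)
      by (apply Rmult_lt_0_compat; [lra|apply pow_lt; lra]). lra.
  - apply net_closure; [|exact HC].
    apply Rmult_lt_0_compat; [apply Rdiv_lt_0_compat; lra|apply pow_lt; lra].
Qed.

End UnionNets.

Definition sim_dim (a : R) : R := - ln 2 / ln a.

Lemma ln_neg a : 0 < a < 1 -> ln a < 0.
Proof. intro Ha. rewrite <- ln_1. apply ln_increasing; lra. Qed.

Lemma sim_dim_pos a : 0 < a < 1 -> 0 < sim_dim a.
Proof.
  intro Ha. pose proof (ln_neg a Ha) as Hln. pose proof (Rinv_lt_0_compat _ Hln).
  assert (0 < ln 2) by (rewrite <- ln_1; apply ln_increasing; lra).
  unfold sim_dim, Rdiv. nra.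
Qed.

Lemma Rpower_sim_dim a : 0 < a < 1 -> Rpower a (sim_dim a) = / 2.
Proof.
  intro Ha. pose proof (ln_neg a Ha). unfold Rpower, sim_dim.
  replace (- ln 2 / ln a * ln a) with (- ln 2) by (field; lra).
  rewrite exp_Ropp, exp_ln; lra.
Qed.

Lemma Rpower_lt_half a s : 0 < a < 1 -> sim_dim a < s -> Rpower a s < / 2.
Proof.
  intros Ha Hs. rewrite <- (Rpower_sim_dim a Ha). unfold Rpower. apply exp_increasing.
  pose proof (ln_neg a Ha). nra.
Qed.

Lemma Rpower_pow_base a s k : 0 < a -> Rpower (a ^ k) s = Rpower a s ^ k.
Proof.
  intro Ha. rewrite <- (Rpower_pow k a), Rpower_mult by exact Ha.
  rewrite <- (Rpower_pow k (Rpower a s)), Rpower_mult by apply Rpower_pos.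
  f_equal. ring.
Qed.

(** * Upper bound: [S_alpha] is [s]-null for every [s] above the similarity dimension *)

(* With [O(2^k)] sets of diameter [O(a^k)], the [s]-sums are [O((2 a^s)^k) -> 0]. *)
Lemma upper_bound a s : 1 / 2 < a < 1 -> sim_dim a < s -> hausdorff_null s (S_alpha a).
Proof.
  intros Ha Hs. pose proof (sim_dim_pos a ltac:(lra)).
  destruct (S_alpha_nets a Ha) as [K [HK Hnets]].
  set (rho := net_rho a).
  assert (Hrho : 0 < rho) by (apply Rdiv_lt_0_compat; lra).
  set (P := Rpower (4 * rho) s).
  assert (HP : 0 < P) by apply Rpower_pos.
  set (q := 2 * Rpower a s).
  pose proof (Rpower_lt_half a s ltac:(lra) Hs). pose proof (Rpower_pos a s).
  apply hausdorff_null_of_nets; [lra|]. intros delta eps Hdelta Heps.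
  destruct (pow_lt_1_zero q ltac:(rewrite Rabs_right; unfold q; lra) (eps / (K * P)))
    as [k1 Hk1]; [apply Rdiv_lt_0_compat; [lra|apply Rmult_lt_0_compat; lra]|].
  destruct (pow_lt_1_zero a ltac:(rewrite Rabs_right; lra) (delta / (4 * rho)))
    as [k2 Hk2]; [apply Rdiv_lt_0_compat; lra|].
  set (k := Nat.max k1 k2).
  specialize (Hk1 k ltac:(lia)). specialize (Hk2 k ltac:(lia)).
  assert (Hak : 0 < a ^ k) by (apply pow_lt; lra).
  rewrite Rabs_right in Hk1 by (apply Rle_ge, pow_le; unfold q; lra).
  rewrite Rabs_right in Hk2 by lra.
  destruct (Hnets k) as [C [HL HC]].
  exists C, (2 * (rho * a ^ k)). split; [|split; [|split; [|exact HC]]].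
  - nra.
  - apply Rmult_lt_compat_l with (r := 4 * rho) in Hk2; [|lra].
    replace (4 * rho * (delta / (4 * rho))) with delta in Hk2 by (field; lra). lra.
  - replace (2 * (2 * (rho * a ^ k))) with (4 * rho * a ^ k) by ring.
    rewrite <- Rpower_mult_distr, Rpower_pow_base by lra. fold P.
    apply Rle_trans with (K * 2 ^ k * (P * Rpower a s ^ k)).
    + apply Rmult_le_compat_r; [|exact HL].
      pose proof (pow_lt (Rpower a s) k ltac:(lra)). nra.
    + replace (K * 2 ^ k * (P * Rpower a s ^ k)) with (K * P * q ^ k)
        by (unfold q; rewrite Rpow_mult_distr; ring).
      apply Rmult_lt_compat_l with (r := K * P) in Hk1; [|apply Rmult_lt_0_compat; lra].
      replace (K * P * (eps / (K * P))) with eps in Hk1 by (field; lra). lra.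
Qed.

(** * A covering lemma for Cantor space *)

Lemma partial_sum_mono (f : nat -> R) : (forall n, 0 <= f n) ->
  forall N M, (N <= M)%nat -> sum_f_R0 f N <= sum_f_R0 f M.
Proof. intros Hf N M H. induction H as [|M H IH]; simpl; [lra|]. pose proof (Hf (S M)). lra. Qed.

Lemma term_le_partial_sum (f : nat -> R) : (forall n, 0 <= f n) ->
  forall n N, (n <= N)%nat -> f n <= sum_f_R0 f N.
Proof.
  intros Hf n N H. apply Rle_trans with (sum_f_R0 f n); [|apply partial_sum_mono; auto].
  destruct n as [|n]; simpl; [lra|]. pose proof (cond_pos_sum f n Hf). lra.
Qed.

(* Countably many cylinders [[center n]_(depth n)] (the words agreeing with [center n]
   on the first [depth n] letters) whose uniform measures [2^-(depth n)] sum to less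
   than [1] cannot cover all infinite binary words.  The avoiding word is built letter
   by letter, keeping the conditional measure of the cylinders, given the prefix chosen
   so far, below the bound; a cylinder containing the word would have conditional
   measure [1] once the prefix reaches its depth. *)
Section CylinderAvoidance.
Variable center : nat -> nat -> bool.
Variable depth : nat -> nat.
Variable c : R.
Hypothesis Hc : c < 1.
Hypothesis Hsum : forall N, sum_f_R0 (fun n => (1 / 2) ^ depth n) N <= c.

Let compat n m (f : nat -> bool) := forall i, (i < Nat.min (depth n) m)%nat -> center n i = f i.

(* Conditional measure of cylinder [n] given the prefix of length [m] of [f]. *)
Let weight n m f : R :=
  if excluded_middle_informative (compat n m f) then (1 / 2) ^ (depth n - m) else 0.

Let load N m f := sum_f_R0 (fun n => weight n m f) N.

Let upd (f : nat -> bool) m (b : bool) := fun i => if Nat.eqb i m then b else f i.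

Let weight_nonneg n m f : 0 <= weight n m f.
Proof. unfold weight. destruct excluded_middle_informative; [apply pow_le|]; lra. Qed.

Let compat_beyond n m f b : (depth n <= m)%nat -> (compat n (S m) (upd f m b) <-> compat n m f).
Proof.
  intro H. unfold compat, upd. split; intros Hc' i Hi.
  - specialize (Hc' i ltac:(lia)). destruct (Nat.eqb_spec i m); [lia|auto].
  - destruct (Nat.eqb_spec i m); [lia|]. apply Hc'; lia.
Qed.

Let compat_within n m f b : (m < depth n)%nat ->
  (compat n (S m) (upd f m b) <-> compat n m f /\ center n m = b).
Proof.
  intro H. unfold compat, upd. split.
  - intro Hc'. split.
    + intros i Hi. specialize (Hc' i ltac:(lia)). destruct (Nat.eqb_spec i m); [lia|auto].
    + specialize (Hc' m ltac:(lia)). rewrite Nat.eqb_refl in Hc'. exact Hc'.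
  - intros [Hc' Hb] i Hi. destruct (Nat.eqb_spec i m); [subst; auto|]. apply Hc'; lia.
Qed.

Let weight_split n m f :
  weight n m f = (weight n (S m) (upd f m false) + weight n (S m) (upd f m true)) / 2.
Proof.
  unfold weight.
  destruct (Compare_dec.le_lt_dec (depth n) m) as [H|H].
  - pose proof (compat_beyond n m f false H). pose proof (compat_beyond n m f true H).
    replace (depth n - m)%nat with 0%nat by lia. replace (depth n - S m)%nat with 0%nat by lia.
    repeat destruct excluded_middle_informative; try tauto; simpl; lra.
  - pose proof (compat_within n m f false H). pose proof (compat_within n m f true H).
    replace (depth n - m)%nat with (S (depth n - S m)) by lia. simpl.
    repeat destruct excluded_middle_informative; try tauto;
      try (destruct (center n m); intuition congruence); lra.
Qed.

Let load_split N m f :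
  load N m f = (load N (S m) (upd f m false) + load N (S m) (upd f m true)) / 2.
Proof.
  unfold load. induction N as [|N IH]; simpl; [apply weight_split|].
  rewrite IH, (weight_split (S N) m f). lra.
Qed.

Let bounded m f := forall N, load N m f <= c.

Let bounded_step m f : bounded m f ->
  bounded (S m) (upd f m false) \/ bounded (S m) (upd f m true).
Proof.
  intro H. apply NNPP. intros [H0 H1]%not_or_and.
  apply not_all_ex_not in H0 as [N0 H0]. apply not_all_ex_not in H1 as [N1 H1].
  apply Rnot_le_lt in H0. apply Rnot_le_lt in H1.
  specialize (H (Nat.max N0 N1)). rewrite load_split in H.
  assert (load N0 (S m) (upd f m false) <= load (Nat.max N0 N1) (S m) (upd f m false))
    by (apply partial_sum_mono; [intro; apply weight_nonneg|lia]).
  assert (load N1 (S m) (upd f m true) <= load (Nat.max N0 N1) (S m) (upd f m true))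
    by (apply partial_sum_mono; [intro; apply weight_nonneg|lia]).
  lra.
Qed.

Let next_letter m f : bool :=
  if excluded_middle_informative (bounded (S m) (upd f m false)) then false else true.

Let Fixpoint prefixes (m : nat) : nat -> bool :=
  match m with O => fun _ => false | S m' => upd (prefixes m') m' (next_letter m' (prefixes m')) end.

Let avoiding_word : nat -> bool := fun i => prefixes (S i) i.

Let prefixes_bounded m : bounded m (prefixes m).
Proof.
  induction m as [|m IH].
  - intro N. unfold load. eapply Rle_trans; [|apply (Hsum N)]. right. apply sum_eq.
    intros n _. unfold weight. destruct excluded_middle_informative as [_|Hn].
    + f_equal. lia.
    + exfalso. apply Hn. intros i Hi. lia.
  - simpl. unfold next_letter. destruct excluded_middle_informative as [?|Hn]; [assumption|].
    destruct (bounded_step m (prefixes m) IH); tauto.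
Qed.

Let prefixes_agree m i : (i < m)%nat -> prefixes m i = avoiding_word i.
Proof.
  induction m as [|m IH]; intro H; [lia|].
  unfold avoiding_word. simpl. unfold upd at 1. destruct (Nat.eqb_spec i m).
  - subst. simpl. unfold upd. rewrite Nat.eqb_refl. reflexivity.
  - rewrite IH by lia. reflexivity.
Qed.

Lemma cylinders_do_not_cover :
  exists u : nat -> bool, forall n, ~ (forall i, (i < depth n)%nat -> u i = center n i).
Proof.
  exists avoiding_word. intros n Hin.
  pose proof (prefixes_bounded (depth n) n) as Hb. unfold load in Hb.
  pose proof (term_le_partial_sum (fun n' => weight n' (depth n) (prefixes (depth n)))
    (fun _ => weight_nonneg _ _ _) n n (le_n n)) as Hterm.
  cbv beta in Hterm. unfold weight at 1 in Hterm.
  destruct excluded_middle_informative as [_|Hn].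
  - rewrite Nat.sub_diag in Hterm. simpl in Hterm. lra.
  - apply Hn. intros i Hi. rewrite prefixes_agree, Hin by lia. reflexivity.
Qed.

End CylinderAvoidance.

(** * Lower bound: [S_alpha] is not [s]-null below the similarity dimension *)

Lemma pow_antitone a j m : 0 < a <= 1 -> (j <= m)%nat -> a ^ m <= a ^ j.
Proof.
  intros Ha H. replace m with (j + (m - j))%nat by lia. rewrite pow_add.
  assert (a ^ (m - j) <= 1) by (rewrite <- (pow1 (m - j)); apply pow_incr; lra).
  pose proof (pow_lt a j ltac:(lra)). nra.
Qed.

Lemma scale_index a g x : 0 < a < 1 -> 0 < g -> 0 < x < g ->
  exists k, g * a ^ S k <= x /\ x < g * a ^ k.
Proof.
  intros Ha Hg Hx.
  destruct (pow_lt_1_zero a ltac:(rewrite Rabs_right; lra) (x / g)) as [K HK];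
    [apply Rdiv_lt_0_compat; lra|].
  specialize (HK (S K) ltac:(lia)). rewrite Rabs_right in HK by (left; apply pow_lt; lra).
  assert (HK' : g * a ^ S K <= x).
  { apply Rmult_lt_compat_l with (r := g) in HK; [|exact Hg].
    replace (g * (x / g)) with x in HK by (field; lra). lra. }
  clear HK. induction K as [|K IH].
  - exists 0%nat. simpl. lra.
  - destruct (Rlt_dec x (g * a ^ S K)); [exists (S K); split; auto|apply IH; lra].
Qed.

Lemma first_difference (u v : nat -> bool) K : ~ (forall i, (i < K)%nat -> u i = v i) ->
  exists j, (j < K)%nat /\ (forall i, (i < j)%nat -> u i = v i) /\ u j <> v j.
Proof.
  induction K as [|K IH]; intro H; [exfalso; apply H; intros; lia|].
  destruct (classic (forall i, (i < K)%nat -> u i = v i)) as [H1|H1].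
  - exists K. split; [lia|]. split; [exact H1|]. intro E. apply H. intros i Hi.
    destruct (Nat.eq_dec i K); [subst; exact E|apply H1; lia].
  - destruct (IH H1) as [j [Hj Hj2]]. exists j. split; [lia|exact Hj2].
Qed.

Lemma content_ge_mass a s g r k : 0 < a < 1 -> 0 < g -> 0 < s < sim_dim a ->
  g * a ^ S k <= r <= 1 -> Rpower (g * a) (sim_dim a) * (1 / 2) ^ k <= Rpower r s.
Proof.
  intros Ha Hg Hs Hr.
  assert (Hak : 0 < a ^ k) by (apply pow_lt; lra).
  replace ((1 / 2) ^ k) with (Rpower (a ^ k) (sim_dim a))
    by (rewrite Rpower_pow_base, Rpower_sim_dim by lra; f_equal; field).
  rewrite Rpower_mult_distr by (try apply Rmult_lt_0_compat; lra).
  apply Rle_trans with (Rpower r (sim_dim a)).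
  - apply Rle_Rpower_l; [left; apply sim_dim_pos; lra|].
    split; [apply Rmult_lt_0_compat; [apply Rmult_lt_0_compat|]; lra|]. simpl in Hr. lra.
  - assert (Hr0 : 0 < r) by (pose proof (pow_lt a (S k) ltac:(lra)); nra).
    unfold Rpower. destruct (Req_dec r 1) as [->|Hr1]; [rewrite ln_1, !Rmult_0_r; lra|].
    assert (ln r < 0) by (rewrite <- ln_1; apply ln_increasing; lra).
    left. apply exp_increasing. nra.
Qed.

Lemma mass_le_content a s g (r : nat -> R) (depth : nat -> nat) :
  0 < a < 1 -> 0 < g -> 0 < s < sim_dim a ->
  (forall n, g * a ^ S (depth n) <= r n <= 1) ->
  forall N, sum_f_R0 (fun n => (1 / 2) ^ depth n) N
              <= / Rpower (g * a) (sim_dim a) * sum_f_R0 (fun n => Rpower (r n) s) N.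
Proof.
  intros Ha Hg Hs Hr N. set (W := Rpower (g * a) (sim_dim a)).
  assert (HW : 0 < W) by apply Rpower_pos.
  rewrite scal_sum. apply sum_Rle. intros n _.
  apply (Rmult_le_reg_l W); [exact HW|].
  replace (W * (Rpower (r n) s * / W)) with (Rpower (r n) s) by (field; lra).
  exact (content_ge_mass a s g (r n) (depth n) Ha Hg Hs (Hr n)).
Qed.

(* A cover with small [s]-sum would, via the scale indices of its sets, give cylinders
   of total mass at most [1/2] containing every coded point, by the separation of the
   coding; but such cylinders miss some infinite word. *)
Lemma lower_bound a s : 0 < a -> a * a < 1 / 2 -> 0 < s < sim_dim a ->
  ~ hausdorff_null s (S_alpha a).
Proof.
  intros Ha Ha2 Hs Hnull.
  assert (Ha1 : 0 < a < 1) by nra.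
  set (g := digit_gap (- (a * a))).
  assert (Hg : 0 < g) by (apply digit_gap_pos; rewrite Rabs_neg_sq; lra).
  set (W := Rpower (g * a) (sim_dim a)).
  assert (HW : 0 < W) by apply Rpower_pos.
  destruct (Hnull (Rmin 1 (g / 2)) (W / 2)) as [U [r [HU [Hr Hsum]]]];
    [apply Rmin_glb_lt; lra|lra|].
  assert (Hrn : forall n, 0 < r n < g /\ r n <= 1).
  { intro n. destruct (Hr n) as [[H1 H2] _].
    pose proof (Rmin_l 1 (g / 2)). pose proof (Rmin_r 1 (g / 2)). lra. }
  destruct (choice (fun n k => g * a ^ S k <= r n /\ r n < g * a ^ k)) as [depth Hdepth].
  { intro n. apply scale_index; [lra|lra|apply Hrn]. }
  destruct (choice (fun n v => (exists u, U n (code_point a u)) -> U n (code_point a v)))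
    as [center Hcenter].
  { intro n. destruct (classic (exists u, U n (code_point a u))) as [[u Hu]|H].
    - exists u. auto.
    - exists (fun _ => false). intro; contradiction. }
  assert (Hmass : forall N, sum_f_R0 (fun n => (1 / 2) ^ depth n) N <= 1 / 2).
  { intro N. eapply Rle_trans.
    - apply (mass_le_content a s g r depth Ha1 Hg Hs).
      intro n. split; [apply Hdepth|apply Hrn].
    - fold W. apply Rle_trans with (/ W * (W / 2)).
      + apply Rmult_le_compat_l; [left; apply Rinv_0_lt_compat; exact HW|apply Hsum].
      + right. field. lra. }
  destruct (cylinders_do_not_cover center depth (1 / 2) ltac:(lra) Hmass) as [u Hu].
  destruct (HU (code_point a u) (code_point_in_S a Ha ltac:(lra) u)) as [n Hun].
  assert (Hcn : U n (code_point a (center n))) by (apply Hcenter; exists u; exact Hun).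
  pose proof (proj2 (Hr n) _ _ Hun Hcn) as Hclose.
  destruct (first_difference u (center n) (depth n) (Hu n)) as [j [Hj [Hagree Hdiff]]].
  pose proof (code_point_separation a Ha ltac:(lra) j u (center n) Hagree Hdiff) as Hsep.
  fold g in Hsep.
  pose proof (pow_antitone a j (depth n) ltac:(lra) ltac:(lia)).
  pose proof (proj2 (Hdepth n)). nra.
Qed.

Lemma hausdorff_dim_of_threshold A d : 0 < d ->
  (forall s, d < s -> hausdorff_null s A) ->
  (forall s, 0 < s < d -> ~ hausdorff_null s A) ->
  hausdorff_dim A d.
Proof.
  intros Hd Hup Hlow. split.
  - intros s [Hs Hnull]. destruct (Rle_lt_dec d s) as [Hds|Hsd]; [exact Hds|].
    exfalso. exact (Hlow s (conj Hs Hsd) Hnull).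
  - intros b Hb. destruct (Rle_lt_dec b d) as [Hbd|Hdb]; [exact Hbd|].
    assert (b <= (d + b) / 2) by (apply Hb; split; [lra|apply Hup; lra]). lra.
Qed.

Lemma dim_S_alpha a : 1 / 2 < a < 1 / sqrt 2 -> hausdorff_dim (S_alpha a) (sim_dim a).
Proof.
  intro Ha.
  assert (Hsqrt : sqrt 2 * sqrt 2 = 2) by (apply sqrt_sqrt; lra).
  assert (Hsqrt0 : 0 < sqrt 2) by (apply sqrt_lt_R0; lra).
  assert (Ha_sqrt : a * sqrt 2 < 1).
  { pose proof (Rmult_lt_compat_r (sqrt 2) _ _ Hsqrt0 (proj2 Ha)) as Ha'.
    replace (1 / sqrt 2 * sqrt 2) with 1 in Ha' by (field; lra). exact Ha'. }
  assert (Ha2 : a * a < 1 / 2) by nra.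
  assert (Ha1 : a < 1) by nra.
  apply hausdorff_dim_of_threshold.
  - apply sim_dim_pos. lra.
  - intros s Hs. apply upper_bound; lra.
  - intros s Hs. apply lower_bound; lra.
Qed.

Lemma sim_dim_Rpower h : 0 < h -> sim_dim (Rpower 2 (- (1 / h))) = h.
Proof.
  intro Hh. assert (0 < ln 2) by (rewrite <- ln_1; apply ln_increasing; lra).
  unfold sim_dim, Rpower. rewrite ln_exp. field. lra.
Qed.

Lemma Rpower_range h : 1 < h < 2 -> 1 / 2 < Rpower 2 (- (1 / h)) < 1 / sqrt 2.
Proof.
  intro Hh. split.
  - replace (1 / 2) with (Rpower 2 (- (1))) by (rewrite Rpower_Ropp, Rpower_1; lra).
    apply Rpower_lt; [lra|]. apply Ropp_lt_contravar.
    unfold Rdiv. rewrite Rmult_1_l, <- Rinv_1. apply Rinv_lt_contravar; lra.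
  - replace (1 / sqrt 2) with (Rpower 2 (- / 2)) by (rewrite Rpower_Ropp, Rpower_sqrt; lra).
    apply Rpower_lt; [lra|]. apply Ropp_lt_contravar.
    unfold Rdiv. rewrite Rmult_1_l. apply Rinv_lt_contravar; lra.
Qed.

Theorem mainTheorem12 :
  (forall alpha : R, 1/2 < alpha < 1 / sqrt 2 ->
     hausdorff_dim (S_alpha alpha) (- ln 2 / ln alpha)) /\
  (forall h : R, 1 < h < 2 ->
     hausdorff_dim (S_alpha (Rpower 2 (- (1 / h)))) h).
Proof.
  split.
  - exact dim_S_alpha.
  - intros h Hh. rewrite <- (sim_dim_Rpower h) at 2 by lra.
    apply dim_S_alpha, Rpower_range, Hh.
Qed.
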